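(* For $m\ge 3$, the group $\mathrm{SL}_m(\mathbb{Z})$ has exponential automorphic growth.
   Context: For a finitely generated group $G$ with finite generating set $\Sigma$, the automorphic growth function sends $n$ to the number of $\operatorname{Aut}(G)$-orbits of $G$ containing an element of word length at most $n$. Exponential means it is $\sim$-equivalent to $n\mapsto 2^n$, where $f\sim g$ iff $f\preccurlyeq g$ and $g\preccurlyeq f$, and $f\preccurlyeq g$ means there is $\lambda\in\mathbb{N}\setminus\{0\}$ with $f(n)\le\lambda g(\lambda n+\lambda)+\lambda$ for all $n$. *)

From HB Require Import structures.
From mathcomp Require Import all_boot all_order all_algebra.
Set Implicit Arguments. Unset Strict Implicit. Unset Printing Implicit Defensive.
Import Order.TTheory GRing.Theory Num.Theory.
Local Open Scope ring_scope.

Section SLm.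
Variable m : nat.
Notation Mat := 'M[int]_m.

Definition inSL (A : Mat) : Prop := \det A = 1.

Definition letter_val (l : Mat * bool) : Mat :=
  if l.2 then invmx l.1 else l.1.

Definition word_val (w : seq (Mat * bool)) : Mat :=
  foldr (fun l acc => letter_val l *m acc) 1%:M w.

Definition word_on (Sigma : seq Mat) (w : seq (Mat * bool)) : Prop :=
  forall l, l \in w -> l.1 \in Sigma.

Definition gen_set (Sigma : seq Mat) : Prop :=
  (forall s, s \in Sigma -> inSL s) /\
  (forall x, inSL x -> exists w, word_on Sigma w /\ word_val w = x).

Definition wlen_le (Sigma : seq Mat) (n : nat) (x : Mat) : Prop :=
  exists w, word_on Sigma w /\ (size w <= n)%N /\ word_val w = x.

Definition is_aut (phi : Mat -> Mat) : Prop :=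
  (forall x, inSL x -> inSL (phi x)) /\
  (forall x y, inSL x -> inSL y -> phi (x *m y) = phi x *m phi y) /\
  (forall x y, inSL x -> inSL y -> phi x = phi y -> x = y) /\
  (forall y, inSL y -> exists x, inSL x /\ phi x = y).

Definition aut_equiv (x y : Mat) : Prop :=
  exists phi, is_aut phi /\ phi x = y.

(* k is the number of Aut-orbits containing an element of word length <= n *)
Definition orbit_count (Sigma : seq Mat) (n k : nat) : Prop :=
  exists s : seq Mat,
    size s = k /\
    (forall x, x \in s -> wlen_le Sigma n x) /\
    (forall i j, (i < k)%N -> (j < k)%N ->
       aut_equiv (nth 0 s i) (nth 0 s j) -> i = j) /\
    (forall x, wlen_le Sigma n x -> exists i, (i < k)%N /\ aut_equiv x (nth 0 s i)).

Definition aut_growth_fun (Sigma : seq Mat) (f : nat -> nat) : Prop :=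
  forall n, orbit_count Sigma n (f n).

End SLm.

Definition growth_le (f g : nat -> nat) : Prop :=
  exists lam : nat, (0 < lam)%N /\
    forall n, (f n <= lam * g (lam * n + lam) + lam)%N.

Definition growth_equiv (f g : nat -> nat) : Prop :=
  growth_le f g /\ growth_le g f.

Definition exponential (f : nat -> nat) : Prop :=
  growth_equiv f (fun n => 2 ^ n)%N.

(* If phi is an automorphism and p > 0 has no prime factor below m, then y := phi (E_ij 1)
   satisfies y^p = E_ij p' for some p', so y^p - 1 is nilpotent.  For each prime power q^a
   exactly dividing p, z := y^(p/q^a) reduces mod q to a unipotent Z; as q >= m we get
   (Z - 1)^q = 0, i.e. Z^q = 1 by Frobenius, and lifting the exponent gives z^(q^a) = 1
   mod q^a.  Hence y^p = 1 mod p and p | p'; by symmetry E_ij p and E_ij p' share an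
   Aut-orbit only if p = p'.

   Conjugating U(a, b) = 1 + a e_01 + b e_02 by E_21 and E_12 maps (a, b) to
   (a + b, a + 2b), so a Horner scheme on bit strings of length k builds U(K h, K h') from
   O(k) letters, for 2^k distinct values of h; a commutator with E_12 and one more letter
   give E_02 (K h + 1).  With K = (m-1)! no prime below m divides K h + 1, so the ball of
   radius O(k) meets 2^k orbits.  Counting words gives the upper bound. *)

From HB Require Import structures.
From mathcomp Require Import all_boot all_order all_algebra zify ring.
From Stdlib Require Import ClassicalEpsilon.
Set Implicit Arguments. Unset Strict Implicit. Unset Printing Implicit Defensive.
Import Order.TTheory GRing.Theory Num.Theory.
Local Open Scope ring_scope.

Lemma mxnilpotent_expn_size (F : fieldType) n (M : 'M[F]_n.+1) k :
  M ^+ k = 0 -> M ^+ n.+1 = 0.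
Proof.
have horner_X0 j : horner_mx M (('X - 0%:P) ^+ j) = M ^+ j.
  by rewrite rmorphXn /= rmorphB /= horner_mx_X horner_mx_C raddf0 subr0.
move=> Mk; have /dvdp_exp_XsubCP [j _ ej] : mxminpoly M %| ('X - 0%:P) ^+ k.
  by rewrite dvd_mxminpoly horner_X0 Mk.
have Mj : M ^+ j = 0.
  by apply/eqP; rewrite -horner_X0 -dvd_mxminpoly -(eqp_dvdr _ ej) dvdpp.
have jn : (j <= n.+1)%N.
  have := dvdp_leq (monic_neq0 (char_poly_monic M)) (mxminpoly_dvd_char M).
  by rewrite size_char_poly (eqp_size ej) polyC0 subr0 size_polyXn.
have -> : M ^+ n.+1 = M ^+ (n.+1 - j) * M ^+ j by rewrite -exprD subnK.
by rewrite Mj mulr0.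
Qed.

Lemma pchar_expn_subr1 (R : nzRingType) q (chq : q \in [pchar R]) (x : R) k :
  (x - 1) ^+ (q ^ k) = x ^+ (q ^ k) - 1.
Proof.
elim: k => [|k IH]; first by rewrite expn0 !expr1.
rewrite expnSr !exprM IH.
have := pFrobenius_autB_comm chq (commr1 (x ^+ (q ^ k))).
by rewrite !pFrobenius_autE expr1n.
Qed.

Definition rough (n d : nat) : Prop := forall r, prime r -> (r %| d)%N -> (n <= r)%N.

Lemma rough_fact_mulS n a : rough n.+1 (n`! * a).+1.
Proof.
move=> r r_prime r_dvd; rewrite ltnNge; apply/negP => r_le_n.
have r_fact : (r %| n`! * a)%N by rewrite dvdn_mulr // dvdn_fact // prime_gt0.
by move: r_dvd; rewrite -addn1 dvdn_addr // dvdn1 => /eqP r1; rewrite r1 in r_prime.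
Qed.

Section CongruenceToOne.
Variable n : nat.

Definition mx_eq1_mod (d : int) (y : 'M[int]_n.+1) : Prop :=
  exists W : 'M[int]_n.+1, y = 1 + d *: W.

Lemma expr1D_scale (c : int) (W : 'M[int]_n.+1) j :
  exists Z, (1 + c *: W) ^+ j = 1 + (c * j%:R) *: W + (c * c) *: Z.
Proof.
elim: j => [|j [Z IH]].
  by exists 0; rewrite expr0 mulr0 scale0r scaler0 !addr0.
exists (j%:R *: (W * W) + Z + c *: (Z * W)).
rewrite exprSr IH !mulrDl !mulrDr !mul1r !mulr1.
rewrite -!scalerAl -!scalerAr !scalerA !scalerDr !scalerA.
rewrite -!addrA; congr (_ + _).
rewrite -[j.+1]addn1 natrD mulrDr mulr1 scalerDl.
rewrite -!addrA addrCA; congr (_ + (_ + (_ *: _ + _))).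
by rewrite [c * j%:R * c]mulrC mulrA.
Qed.

Lemma mx_eq1_mod_expn (c : int) q y : (q%:Z %| c)%Z ->
  mx_eq1_mod c y -> mx_eq1_mod (c * q%:Z) (y ^+ q).
Proof.
move=> /dvdzP [c' ->] [W ->]; have [Z ->] := expr1D_scale (c' * q%:Z) W q.
exists (W + c' *: Z); rewrite scalerDr scalerA -addrA; congr (_ + (_ + _ *: _)).
- by rewrite -natz.
- by rewrite mulrA mulrAC.
Qed.

Lemma mx_eq1_mod1 y : mx_eq1_mod 1 y.
Proof. by exists (y - 1); rewrite scale1r addrC subrK. Qed.

Section PrimeModulus.
Variable q : nat.
Hypothesis q_prime : prime q.
Hypothesis size_le_q : (n < q)%N.

Lemma mx_eq1_mod_prime y k j :
  (y ^+ (q ^ k) - 1) ^+ j = 0 -> mx_eq1_mod q%:Z (y ^+ q).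
Proof.
move=> unip; pose f := @map_mx _ _ (@intmul 'F_q 1) n.+1 n.+1.
have chq := pchar_Fp q_prime.
have chM : q \in [pchar 'M['F_q]_n.+1] by rewrite pchar_lalg.
have f_unipotent : (f y - 1) ^+ (q ^ k * j) = 0.
  rewrite exprM pchar_expn_subr1 //.
  have -> : f y ^+ (q ^ k) - 1 = f (y ^+ (q ^ k) - 1) by rewrite /f rmorphB rmorph1 rmorphXn.
  by rewrite -rmorphXn unip raddf0.
have f_yq : f (y ^+ q - 1) = 0.
  rewrite /f rmorphB rmorph1 rmorphXn -[q in _ ^+ q]expn1 -pchar_expn_subr1 // expn1.
  have -> : (f y - 1) ^+ q = (f y - 1) ^+ (q - n.+1) * (f y - 1) ^+ n.+1.
    by rewrite -exprD subnK.
  by rewrite (mxnilpotent_expn_size f_unipotent) mulr0.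
exists (\matrix_(a, b) (((y ^+ q - 1) a b) %/ q)%Z).
apply/matrixP => a b.
have : (q%:Z %| (y ^+ q - 1) a b)%Z.
  by have /matrixP/(_ a b) := f_yq; rewrite !mxE (dvdz_pcharf chq) => ->.
by rewrite !mxE => /divzK; rewrite mulrC => ->; rewrite addrC subrK.
Qed.

Lemma mx_eq1_mod_prime_power y k j :
  (y ^+ (q ^ k) - 1) ^+ j = 0 -> mx_eq1_mod (q ^ k)%N%:Z (y ^+ (q ^ k)).
Proof.
case: k => [|k] unip; first exact: mx_eq1_mod1.
suff lift l : mx_eq1_mod (q ^ l.+1)%N%:Z (y ^+ (q ^ l.+1)) by [].
elim: l => [|l IH]; first by rewrite expn1; exact: mx_eq1_mod_prime unip.
rewrite expnSr exprM PoszM.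
by apply: mx_eq1_mod_expn IH; rewrite dvdzE /= dvdn_exp.
Qed.
End PrimeModulus.

Lemma rough_expn_dvd d (y : 'M[int]_n.+1) j : (0 < d)%N -> rough n.+1 d ->
  (y ^+ d - 1) ^+ j = 0 -> forall a b, (d%:Z %| (y ^+ d - 1) a b)%Z.
Proof.
move=> d_gt0 d_rough unip a b; rewrite dvdzE /=.
apply/(dvdn_partP _ d_gt0) => r; rewrite mem_primes => /and3P [r_prime _ r_dvd].
have rd : (r ^ logn r d %| d)%N := pfactor_dvdnn r d.
have := mx_eq1_mod_prime_power r_prime (d_rough r r_prime r_dvd)
  (y := y ^+ (d %/ r ^ logn r d)) (k := logn r d).
rewrite -exprM divnK // => /(_ j unip) [W ->].
by rewrite p_part addrAC subrr add0r mxE abszM dvdn_mulr.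
Qed.
End CongruenceToOne.

Section SLWords.
Variable n : nat.
Local Notation Mat := 'M[int]_n.+1.
Implicit Types (x y : Mat) (S : seq Mat) (w : seq (Mat * bool)).

Lemma inSL_mul x y : inSL x -> inSL y -> inSL (x * y).
Proof. by rewrite /inSL -[x * y]/(x *m y) det_mulmx => -> ->; rewrite mulr1. Qed.

Lemma inSL_expn x d : inSL x -> inSL (x ^+ d).
Proof.
move=> SLx; elim: d => [|d IH]; first exact: det1.
by rewrite exprS; apply: inSL_mul.
Qed.

Lemma word_val_cat w1 w2 : word_val (w1 ++ w2) = word_val w1 * word_val w2.
Proof. by elim: w1 => [|l w1 IH] /=; rewrite ?mul1r // IH; apply: mulrA. Qed.

Lemma word_val_SL S w : (forall s, s \in S -> inSL s) -> word_on S w -> inSL (word_val w).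
Proof.
move=> SL_S; elim: w => [|[s b] w IH] w_on /=; first exact: det1.
have SLs : inSL s := SL_S s (w_on _ (mem_head _ _)).
apply: inSL_mul; last by apply: IH => l wl; apply: w_on; rewrite inE wl orbT.
by rewrite /letter_val; case: b {w_on IH} => //=; rewrite /inSL det_inv SLs invr1.
Qed.

Lemma wlen_le1 S : wlen_le S 0 1.
Proof. by exists [::]. Qed.

Lemma wlen_le_mul S a b x y :
  wlen_le S a x -> wlen_le S b y -> wlen_le S (a + b) (x * y).
Proof.
move=> [w1 [on1 [size1 <-]]] [w2 [on2 [size2 <-]]].
exists (w1 ++ w2); split; last by rewrite size_cat leq_add // word_val_cat.
by move=> l; rewrite mem_cat => /orP [/on1 | /on2].
Qed.

Lemma wlen_le_leq S a b x : (a <= b)%N -> wlen_le S a x -> wlen_le S b x.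
Proof. by move=> ab [w [on [size_w val_w]]]; exists w; rewrite (leq_trans size_w). Qed.

Lemma wlen_le_bounded S (xs : seq Mat) : gen_set S -> (forall x, x \in xs -> inSL x) ->
  exists c, forall x, x \in xs -> wlen_le S c x.
Proof.
move=> [_ genS]; elim: xs => [|x xs IH] SL_xs; first by exists 0%N.
have [c IHc] := IH (fun y xsy => SL_xs y (mem_behead (s := x :: xs) xsy)).
have [w [on val_w]] := genS x (SL_xs x (mem_head _ _)).
exists (size w + c)%N => y; rewrite inE => /orP [/eqP -> | /IHc].
  by apply: wlen_le_leq (leq_addr _ _) _; exists w.
exact: wlen_le_leq (leq_addl _ _).
Qed.

Lemma aut_expnS phi x d : is_aut phi -> inSL x -> phi (x ^+ d.+1) = phi x ^+ d.+1.
Proof.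
move=> [_ [phiM _]] SLx; elim: d => [|d IH]; first by rewrite !expr1.
by rewrite exprS (phiM _ _ SLx (inSL_expn _ SLx)) IH [in RHS]exprS.
Qed.

Lemma aut_equiv_refl x : aut_equiv x x.
Proof. by exists id; do 4!split=> //; move=> y SLy; exists y. Qed.

Lemma aut_equiv_trans x y z : aut_equiv x y -> aut_equiv y z -> aut_equiv x z.
Proof.
move=> [f [[f1 [f2 [f3 f4]]] <-]] [g [[g1 [g2 [g3 g4]]] <-]].
exists (g \o f); split=> //; split; first by move=> a /f1 /g1.
split; first by move=> a b SLa SLb /=; rewrite f2 // g2 //; apply: f1.
split; first by move=> a b SLa SLb /= /g3 fab; apply: f3 => //; apply: fab; apply: f1.
move=> c /g4 [b [/f4 [a [SLa <-]] <-]]; by exists a.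
Qed.

Lemma aut_equiv_sym x y : inSL x -> aut_equiv x y -> aut_equiv y x.
Proof.
move=> SLx [f [[f1 [f2 [f3 f4]]] <-]].
pose g z := epsilon (inhabits z) (fun x' => inSL x' /\ f x' = z).
have gK z : inSL z -> inSL (g z) /\ f (g z) = z.
  by move=> /f4 ex_z; apply: (epsilon_spec (inhabits z) _ ex_z).
have fK a : inSL a -> g (f a) = a.
  by move=> SLa; have [SLg fg] := gK _ (f1 _ SLa); apply: f3.
exists g; split; last exact: fK.
split; first by move=> a /gK [].
split.
  move=> a b /gK [SLga fga] /gK [SLgb fgb].
  by rewrite -{1}fga -{1}fgb -f2 // fK //; apply: inSL_mul.
split; first by move=> a b /gK [_ fga] /gK [_ fgb] gab; rewrite -fga -fgb gab.
by move=> c SLc; exists (f c); split; [apply: f1 | apply: fK].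
Qed.
End SLWords.

Section ClassRepresentatives.
Variables (T : eqType) (D : T -> Prop) (R : T -> T -> Prop).
Hypothesis R_refl : forall x, R x x.
Hypothesis R_sym : forall x y, D x -> R x y -> R y x.
Hypothesis R_trans : forall x y z, R x y -> R y z -> R x z.

Fixpoint reprs (L : seq T) : seq T :=
  if L is x :: L' then
    if excluded_middle_informative (exists2 y, y \in reprs L' & R x y)
    then reprs L' else x :: reprs L'
  else [::].

Lemma reprs_sub L : {subset reprs L <= L}.
Proof.
elim: L => [|x L IH] //= y; case: ifP => _.
  by move/IH; rewrite inE => ->; rewrite orbT.
by rewrite !inE => /orP [-> // | /IH ->]; rewrite orbT.
Qed.

Lemma size_reprs L : (size (reprs L) <= size L)%N.
Proof. by elim: L => [|x L IH] //=; case: ifP => _ /=; lia. Qed.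

Lemma reprs_cover L x : x \in L -> exists2 y, y \in reprs L & R x y.
Proof.
elim: L => [|z L IH] //=; rewrite inE => /orP [/eqP -> | /IH [y ry xy]].
  by case: ifPn => [/sumboolP // | _]; exists z; rewrite ?mem_head.
by case: ifP => _; exists y; rewrite // inE ry orbT.
Qed.

Lemma reprs_inequiv L x0 i j : (forall x, x \in L -> D x) ->
  (i < size (reprs L))%N -> (j < size (reprs L))%N ->
  R (nth x0 (reprs L) i) (nth x0 (reprs L) j) -> i = j.
Proof.
elim: L i j => [|x L IH] i j DL //=.
have {}IH := IH _ _ (fun y Ly => DL y (mem_behead (s := x :: L) Ly)).
case: ifPn => [_|/sumboolP new_x]; first exact: IH.
case: i j => [|i] [|j] //= lti ltj Rij; last by rewrite (IH i j).
  by case: new_x; exists (nth x0 (reprs L) j); rewrite ?mem_nth.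
case: new_x; exists (nth x0 (reprs L) i); rewrite ?mem_nth //.
by apply: R_sym Rij; apply/DL/mem_behead/reprs_sub; rewrite /= mem_nth.
Qed.

Lemma card_le_size_reprs L (I : finType) (g : I -> T) :
  (forall x, x \in L -> D x) -> (forall t, g t \in L) ->
  (forall t t', R (g t) (g t') -> t = t') -> (#|I| <= size (reprs L))%N.
Proof.
move=> DL gL g_inj; set s := reprs L.
pose Rb x y : bool := excluded_middle_informative (R x y).
have Rb_has t : has (Rb (g t)) s.
  by have [y sy gy] := reprs_cover (gL t); apply/hasP; exists y => //; exact/sumboolP.
pose idx t := find (Rb (g t)) s.
have R_idx t : R (g t) (nth (g t) s (idx t)).
  by apply/sumboolP; exact: nth_find (Rb_has t).
have idx_inj : injective idx.
  move=> t t' eq_idx; apply: g_inj; apply: R_trans (R_idx t) _.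
  rewrite eq_idx (set_nth_default (g t') (g t)) -?has_find //.
  by apply: R_sym (R_idx t'); apply/DL/gL.
rewrite -(size_iota 0 (size s)) cardT -(size_map idx).
apply: uniq_leq_size; first by rewrite map_inj_uniq ?enum_uniq.
by move=> _ /mapP [t _ ->]; rewrite mem_iota /idx -has_find Rb_has.
Qed.
End ClassRepresentatives.

Section Ball.
Variables (n : nat) (S : seq 'M[int]_n.+1).
Hypothesis SL_S : forall s, s \in S -> inSL s.
Local Notation Mat := 'M[int]_n.+1.

Definition letters : seq (Mat * bool) := [seq (s, b) | s <- S, b <- [:: false; true]].

Fixpoint words k : seq (seq (Mat * bool)) :=
  if k is k'.+1 then [::] :: [seq l :: w | l <- letters, w <- words k'] else [:: [::]].

Lemma size_words k : (size (words k) <= (2 * size S).+1 ^ k)%N.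
Proof.
elim: k => [|k IH] //=; rewrite size_allpairs size_allpairs /= expnS mulnC.
have := leq_mul (leqnn (2 * size S)) IH; have := expn_gt0 (2 * size S).+1 k; lia.
Qed.

Lemma mem_words k w : w \in words k <-> word_on S w /\ (size w <= k)%N.
Proof.
elim: k w => [|k IH] [|[s b] w] /=; rewrite ?inE.
- by split=> // _; split=> // l.
- by split=> // -[].
- by split=> // _; split=> // l.
split.
  move=> /orP [//|] /allpairsP [[l w'] [/allpairsP [[s' b'] [Ss' _ ->]]]].
  move=> /IH [on_w' size_w'] /= [-> -> ->].
  by split=> // l'; rewrite inE => /orP [/eqP -> | /on_w'].
move=> [on_w size_w]; apply/orP; right; apply/allpairsP; exists ((s, b), w) => /=.
split=> //; last by apply/IH; split=> // l wl; apply: on_w; rewrite inE wl orbT.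
by apply/allpairsP; exists (s, b); rewrite (on_w (s, b)) ?mem_head //; case: b {on_w}.
Qed.

Definition ball k : seq Mat := map (@word_val n.+1) (words k).

Lemma mem_ball k x : x \in ball k <-> wlen_le S k x.
Proof.
split; first by move=> /mapP [w /mem_words [on_w size_w] ->]; exists w.
by move=> [w [on_w [size_w <-]]]; apply/map_f/mem_words.
Qed.

Lemma ball_SL k x : x \in ball k -> inSL x.
Proof. by move=> /mem_ball [w [on_w [_ <-]]]; exact: word_val_SL on_w. Qed.

Definition aut_growth k := size (reprs (@aut_equiv n.+1) (ball k)).

Lemma orbit_count_aut_growth k : orbit_count S k (aut_growth k).
Proof.
exists (reprs (@aut_equiv n.+1) (ball k)); split=> //; split.
  by move=> x /reprs_sub; apply: (mem_ball _ _).1.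
split.
  rewrite /aut_growth => i j; apply: (reprs_inequiv (@aut_equiv_sym n)).
  exact: ball_SL.
move=> x /(mem_ball _ _).2 /(reprs_cover (@aut_equiv_refl n)) [y ry xy].
by exists (index y (reprs (@aut_equiv n.+1) (ball k))); rewrite index_mem nth_index.
Qed.

Lemma aut_growth_le_expn k : (aut_growth k <= (2 * size S).+1 ^ k)%N.
Proof. by rewrite (leq_trans (size_reprs _ _)) // size_map size_words. Qed.

Lemma card_le_aut_growth (I : finType) (g : I -> Mat) k :
  (forall t, wlen_le S k (g t)) -> (forall t t', aut_equiv (g t) (g t') -> t = t') ->
  (#|I| <= aut_growth k)%N.
Proof.
move=> g_ball g_inj; rewrite /aut_growth.
apply: (card_le_size_reprs (@aut_equiv_refl n) (@aut_equiv_sym n) (@aut_equiv_trans n)) g_inj.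
  exact: ball_SL.
by move=> t; apply/mem_ball.
Qed.
End Ball.

Lemma growth_le_expn a (f : nat -> nat) :
  (forall k, f k <= a.+1 ^ k)%N -> growth_le f (fun k => 2 ^ k)%N.
Proof.
move=> f_le; exists a.+1; split=> // k; apply: leq_trans (f_le k) _.
apply: leq_trans (leq_addr _ _); apply: leq_trans (leq_pmull _ _) => //.
apply: (@leq_trans (2 ^ (a.+1 * k))); last by rewrite leq_exp2l // leq_addr.
case: k => [|k]; first by rewrite expn_gt0.
by rewrite expnM leq_exp2r // ltnW // ltn_expl.
Qed.

Lemma expn2_growth_le c (f : nat -> nat) :
  (forall k, 2 ^ k <= f (c.+1 * k + c.+1))%N -> growth_le (fun k => 2 ^ k)%N f.
Proof.
move=> f_ge; exists c.+1; split=> // k.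
by apply: leq_trans (leq_addr _ _); apply: leq_trans (f_ge k) (leq_pmull _ _).
Qed.

Section Transvections.
Variable n : nat.
Local Notation Mat := 'M[int]_n.+1.
Implicit Types (i j : 'I_n.+1) (a b t : int).

Definition Em i j t : Mat := 1 + t *: delta_mx i j.

Let mul_delta (a b c d : 'I_n.+1) :
  delta_mx a b * delta_mx c d = delta_mx a d *+ (b == c) :> Mat.
Proof. exact: mul_delta_mx_cond. Qed.
Let scale_mull (k : int) (x y : Mat) : (k *: x) * y = k *: (x * y).
Proof. by rewrite scalerAl. Qed.
Let scale_mulr (k : int) (x y : Mat) : x * (k *: y) = k *: (x * y).
Proof. by rewrite scalerAr. Qed.

Lemma det_Em i j t : i != j -> \det (Em i j t) = 1.
Proof.
wlog ji : i j t / (j < i)%N => [hwlog ij | _].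
  case: (ltngtP i j) => [ij' | ji | /val_inj eq_ij]; last by rewrite eq_ij eqxx in ij.
  - by rewrite -det_tr /Em linearD /= trmx1 linearZ /= trmx_delta hwlog // eq_sym.
  - exact: hwlog.
have neq_ij r c : (r <= c)%N -> ((r == i) && (c == j)) = false.
  by move=> rc; apply/andP => -[/eqP ri /eqP cj]; move: ji; rewrite -ri -cj ltnNge rc.
rewrite det_trig; last first.
  apply/is_trig_mxP => r c rc; rewrite !mxE neq_ij ?(ltnW rc) // mulr0 addr0.
  by case: eqP rc => [-> | _]; rewrite ?ltnn.
by rewrite big1 // => k _; rewrite !mxE eqxx neq_ij // mulr0 addr0.
Qed.

Lemma Em_add i j a b : i != j -> Em i j a * Em i j b = Em i j (a + b).
Proof.
move=> ij; rewrite /Em mulrDl !mulrDr !mul1r mulr1 scale_mull scale_mulr scalerA.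
by rewrite mul_delta eq_sym (negbTE ij) mulr0n scaler0 addr0 scalerDl addrAC addrA.
Qed.

Lemma Em_expn i j (p : nat) : i != j -> Em i j 1 ^+ p = Em i j p%:Z.
Proof.
move=> ij; elim: p => [|p IH]; first by rewrite expr0 /Em scale0r addr0.
by rewrite exprSr IH Em_add // -[p.+1]addn1 PoszD.
Qed.

Lemma Em_sub1_sqr i j t : i != j -> (Em i j t - 1) ^+ 2 = 0.
Proof.
move=> ij; rewrite /Em addrC addKr expr2 scale_mull scale_mulr mul_delta.
by rewrite eq_sym (negbTE ij) !scaler0.
Qed.

Variables i0 i1 i2 : 'I_n.+1.
Hypotheses (i01 : i0 != i1) (i02 : i0 != i2) (i12 : i1 != i2).

Definition Um a b : Mat := 1 + a *: delta_mx i0 i1 + b *: delta_mx i0 i2.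

Let i01F : (i0 == i1) = false := negbTE i01.
Let i02F : (i0 == i2) = false := negbTE i02.
Let i12F : (i1 == i2) = false := negbTE i12.
Let i10F : (i1 == i0) = false. Proof. by rewrite eq_sym. Qed.
Let i20F : (i2 == i0) = false. Proof. by rewrite eq_sym. Qed.
Let i21F : (i2 == i1) = false. Proof. by rewrite eq_sym. Qed.

Ltac mx_expand := rewrite /Em /Um;
  do 4 rewrite ?(mulrDl, mulrDr, mul1r, mulr1, scale_mull, scale_mulr, scalerA, mul_delta,
    i01F, i02F, i12F, i10F, i20F, i21F, eqxx, mulr0n, mulr1n, mul0r, mulr0, scaler0, addr0, add0r);
  apply/matrixP => r c; rewrite !mxE ?mulr0n ?mulr1n; ring.

Lemma Um_add a b a' b' : Um a b * Um a' b' = Um (a + a') (b + b').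
Proof. mx_expand. Qed.

Lemma Um_conj21 a b : Em i2 i1 (-1) * Um a b * Em i2 i1 1 = Um (a + b) b.
Proof. mx_expand. Qed.

Lemma Um_conj12 a b : Em i1 i2 (-1) * Um a b * Em i1 i2 1 = Um a (a + b).
Proof. mx_expand. Qed.

Lemma Um_commutator a b : Um a b * Em i1 i2 1 * Um (- a) (- b) * Em i1 i2 (-1) = Em i0 i2 a.
Proof. mx_expand. Qed.

Lemma det_Um a b : \det (Um a b) = 1.
Proof.
have -> : Um a b = Em i0 i1 a * Em i0 i2 b by mx_expand.
by apply: inSL_mul; apply: det_Em.
Qed.
End Transvections.

(* A step of [numeral] is the effect on (a, b) of conjugating [Um a b] by [Em i2 i1],
   then by [Em i1 i2] ([Um_conj21], [Um_conj12]), followed for a set bit by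
   multiplication with [Um 1 1] ([Um_add]). *)
Fixpoint numeral (bs : seq bool) : nat * nat :=
  if bs is b :: bs' then
    let v := numeral bs' in (v.1 + v.2 + b, v.1 + 2 * v.2 + b)%N
  else (0, 0)%N.

Fixpoint place_value j : nat * nat :=
  if j is j'.+1 then let v := place_value j' in (v.1 + v.2, v.1 + 2 * v.2)%N else (1, 1)%N.

Lemma numeral_rcons bs b : numeral (rcons bs b) =
  ((numeral bs).1 + b * (place_value (size bs)).1,
   (numeral bs).2 + b * (place_value (size bs)).2)%N.
Proof.
elim: bs => [|b' bs IH] /=; first by case: b.
rewrite {}IH /=; case: (numeral bs) (place_value (size bs)) => [x y] [u v] /=.
by case: b; case: b'; congr pair; lia.
Qed.

Lemma place_value_gt0 j : (0 < (place_value j).1 <= (place_value j).2)%N.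
Proof. by elim: j => [|j IH] //=; lia. Qed.

Lemma numeral_lt_place_value bs : ((numeral bs).1 < (place_value (size bs)).1)%N.
Proof.
elim/last_ind: bs => [|bs b IH] //=.
by rewrite numeral_rcons size_rcons /=; have := place_value_gt0 (size bs); case: b; lia.
Qed.

Lemma numeral_inj bs cs : size bs = size cs -> (numeral bs).1 = (numeral cs).1 -> bs = cs.
Proof.
elim/last_ind: bs cs => [|bs b IH] cs; first by case: cs.
case/lastP: cs => [|cs c]; rewrite ?size_rcons // => -[size_eq].
rewrite !numeral_rcons /= -size_eq.
have := numeral_lt_place_value bs; have := numeral_lt_place_value cs; rewrite -size_eq.
move=> lt_cs lt_bs eq_sum.
have eq_bc : b = c by case: b c eq_sum => [] [] //= eq_sum; exfalso; lia.
have eq_bs : bs = cs by apply: IH => //; move: eq_sum; rewrite eq_bc; lia.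
by rewrite eq_bs eq_bc.
Qed.

Section TransvectionWordLength.
Variables (n : nat) (i0 i1 i2 : 'I_n.+1).
Hypotheses (i01 : i0 != i1) (i02 : i0 != i2) (i12 : i1 != i2).
Variables (S : seq 'M[int]_n.+1) (c : nat).
Hypothesis wlen_E12 : wlen_le S c (Em i1 i2 1).
Hypothesis wlen_E12N : wlen_le S c (Em i1 i2 (-1)).
Hypothesis wlen_E21 : wlen_le S c (Em i2 i1 1).
Hypothesis wlen_E21N : wlen_le S c (Em i2 i1 (-1)).
Local Notation Um := (Um i0 i1 i2).

Lemma wlen_le_Um_numeral (a : int) bs : wlen_le S c (Um a a) ->
  wlen_le S (5 * c * size bs) (Um (a * (numeral bs).1%:Z) (a * (numeral bs).2%:Z)).
Proof.
move=> wlen_Ua; elim: bs => [|b bs IH].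
  by rewrite muln0 !mulr0 /Um !scale0r !addr0; exact: wlen_le1.
have wlen_Ub : wlen_le S c (Um (a * b%:Z) (a * b%:Z)).
  case: b; first by rewrite !mulr1.
  by rewrite /Um !mulr0 !scale0r !addr0; apply: (wlen_le_leq (leq0n c)); exact: wlen_le1.
have -> : Um (a * (numeral (b :: bs)).1%:Z) (a * (numeral (b :: bs)).2%:Z) =
    Em i1 i2 (-1) * (Em i2 i1 (-1) * Um (a * (numeral bs).1%:Z) (a * (numeral bs).2%:Z)
    * Em i2 i1 1) * Em i1 i2 1 * Um (a * b%:Z) (a * b%:Z).
  rewrite Um_conj21 // Um_conj12 // Um_add //=.
  by congr Um; rewrite !PoszD ?PoszM; ring.
apply: (wlen_le_leq _ (wlen_le_mul (wlen_le_mul (wlen_le_mul wlen_E12N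
  (wlen_le_mul (wlen_le_mul wlen_E21N IH) wlen_E21)) wlen_E12) wlen_Ub)).
by rewrite /=; lia.
Qed.

Variable K : nat.
Hypothesis wlen_UK : wlen_le S c (Um K%:Z K%:Z).
Hypothesis wlen_UKN : wlen_le S c (Um (- K%:Z) (- K%:Z)).
Hypothesis wlen_E02 : wlen_le S c (Em i0 i2 1).

Lemma wlen_le_Em_numeral bs :
  wlen_le S (10 * c * size bs + 3 * c) (Em i0 i2 (K * (numeral bs).1).+1%:Z).
Proof.
have := wlen_le_mul (wlen_le_mul (wlen_le_mul (wlen_le_mul (wlen_le_Um_numeral bs wlen_UK)
  wlen_E12) (wlen_le_Um_numeral bs wlen_UKN)) wlen_E12N) wlen_E02.
rewrite !mulNr Um_commutator // Em_add // -[(K * _).+1]addn1 PoszD PoszM.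
by apply: wlen_le_leq; lia.
Qed.
End TransvectionWordLength.

Section TransvectionInvariant.
Variables (n : nat) (i j : 'I_n.+1).
Hypothesis ij : i != j.

Lemma aut_equiv_Em_dvd (p p' : nat) : (0 < p)%N -> rough n.+1 p ->
  aut_equiv (Em i j p%:Z) (Em i j p'%:Z) -> (p %| p')%N.
Proof.
move=> p_gt0 p_rough [phi [phi_aut phi_Ep]].
have yp : phi (Em i j 1) ^+ p = Em i j p'%:Z.
  rewrite -(prednK p_gt0) -aut_expnS //; last exact: det_Em.
  by rewrite Em_expn // prednK.
have unip : (phi (Em i j 1) ^+ p - 1) ^+ 2 = 0 by rewrite yp Em_sub1_sqr.
have := rough_expn_dvd p_gt0 p_rough unip i j; rewrite yp.
by rewrite /Em addrC addKr !mxE !eqxx mulr1 dvdzE.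
Qed.

Lemma aut_equiv_Em_inj (p p' : nat) : (0 < p)%N -> (0 < p')%N ->
  rough n.+1 p -> rough n.+1 p' -> aut_equiv (Em i j p%:Z) (Em i j p'%:Z) -> p = p'.
Proof.
move=> p_gt0 p'_gt0 p_rough p'_rough Epp'; apply/eqP; rewrite eqn_dvd.
rewrite (aut_equiv_Em_dvd p_gt0 p_rough Epp') (aut_equiv_Em_dvd p'_gt0 p'_rough) //.
exact: aut_equiv_sym (det_Em _ ij) Epp'.
Qed.
End TransvectionInvariant.

Lemma expn2_le_aut_growth n (S : seq 'M[int]_n.+3) : gen_set S ->
  exists c, forall k, (2 ^ k <= aut_growth S (c.+1 * k + c.+1))%N.
Proof.
move=> genS; pose i0 := @Ordinal n.+3 0 isT.
pose i1 := @Ordinal n.+3 1 isT; pose i2 := @Ordinal n.+3 2 isT; pose K := n.+2`!.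
pose gens := [:: Em i1 i2 1; Em i1 i2 (-1); Em i2 i1 1; Em i2 i1 (-1);
  Um i0 i1 i2 K%:Z K%:Z; Um i0 i1 i2 (- K%:Z) (- K%:Z); Em i0 i2 1].
have [c wlen_c] : exists c, forall x, x \in gens -> wlen_le S c x.
  apply: wlen_le_bounded genS _ => x; rewrite !inE => /or4P [| | | /or4P [| | |]] /eqP ->;
  exact: det_Em || exact: det_Um.
exists (10 * c)%N => k; have -> : (2 ^ k = #|{: k.-tuple bool}|)%N.
  by rewrite card_tuple card_bool.
pose g (t : k.-tuple bool) := Em i0 i2 (K * (numeral t).1).+1%:Z.
apply: (card_le_aut_growth genS.1 (g := g)) => [t | t t'].
  apply: (wlen_le_leq _ (wlen_le_Em_numeral (i1 := i1) (c := c) (K := K) _ _ _ _ _ _ _ _ _ _ t));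
    try by [|apply: wlen_c; rewrite !inE eqxx ?orbT].
  by rewrite size_tuple; lia.
move=> /(aut_equiv_Em_inj _ (ltn0Sn _) (ltn0Sn _) (@rough_fact_mulS _ _) (@rough_fact_mulS _ _)).
move=> /(_ isT) /succn_inj /eqP; rewrite eqn_pmul2l ?fact_gt0 // => /eqP eq_num.
by apply: val_inj; apply: numeral_inj; rewrite ?size_tuple.
Qed.

Theorem mainTheorem18 (m : nat) (hm : (3 <= m)%N) (Sigma : seq 'M[int]_m) :
  gen_set Sigma ->
  exists f : nat -> nat, aut_growth_fun Sigma f /\ exponential f.
Proof.
case: m hm Sigma => [|[|[|n]]] // _ Sigma genS.
exists (aut_growth Sigma); split; first exact: orbit_count_aut_growth genS.1.
have [c lower] := expn2_le_aut_growth genS.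
split; first exact: growth_le_expn (@aut_growth_le_expn _ Sigma).
exact: expn2_growth_le lower.
Qed.
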